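(* For every integer $n\ge 1$, $\gamma^{DLD}(P_n\square P_2)=n$.
   Context: $P_k$ denotes the path on $k$ vertices. The Cartesian product $G\square H$ has vertex set $V(G)\times V(H)$, with $(u,v)$ adjacent to $(u',v')$ iff either $u=u'$ and $vv'\in E(H)$, or $uu'\in E(G)$ and $v=v'$. For a vertex $u$, $N[u]$ is its closed neighbourhood. A code is a non-empty subset $C$ of the vertex set $V$; $I(C;u)=N[u]\cap C$. A code $C$ is solid-locating-dominating if $I(C;u)\ne\emptyset$ for every $u\in V\setminus C$ and $I(C;u)\not\subseteq I(C;v)$ for all distinct $u,v\in V\setminus C$; $\gamma^{DLD}$ is the minimum size of such a code. *)

From mathcomp Require Import all_boot.
Set Implicit Arguments. Unset Strict Implicit. Unset Printing Implicit Defensive.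

(* A simple graph on a finite vertex type T is given by an adjacency relation e
   (assumed symmetric and irreflexive where relevant). *)

Definition cnbhd (T : finType) (e : rel T) (u : T) : {set T} :=
  [set v | (v == u) || e u v].

Definition Icode (T : finType) (e : rel T) (C : {set T}) (u : T) : {set T} :=
  cnbhd e u :&: C.

Definition is_DLD (T : finType) (e : rel T) (C : {set T}) : bool :=
  [&& C != set0,
      [forall u in ~: C, Icode e C u != set0] &
      [forall u in ~: C, forall v in ~: C,
          (u != v) ==> ~~ (Icode e C u \subset Icode e C v)]].

(* gamma^DLD: minimum size of a DLD code (the default #|T| is never smaller
   than the size of any code, so it does not affect the minimum whenever a
   DLD code exists). *)
Definition gammaDLD (T : finType) (e : rel T) : nat :=
  \big[minn/#|T|]_(C : {set T} | is_DLD e C) #|C|.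

Definition path_rel (k : nat) : rel 'I_k :=
  fun i j => (i.+1 == j :> nat) || (j.+1 == i :> nat).

Definition cart_rel (A B : finType) (eA : rel A) (eB : rel B) : rel (A * B) :=
  fun x y => ((x.1 == y.1) && eB x.2 y.2) || (eA x.1 y.1 && (x.2 == y.2)).

From mathcomp Require Import all_boot all_order zify.
Import Order.TTheory.
Set Implicit Arguments. Unset Strict Implicit. Unset Printing Implicit Defensive.

(* Every vertex u outside a solid-locating-dominating code C
   sends about 6 / |I(C;u)| to each code vertex of I(C;u), hence at least 6 in
   total.  In the ladder P_n x P_2 no code vertex c receives more than 6: if a
   sender u has I(C;u) = {c}, solidity makes u the only sender of c; otherwise
   c has at most three non-code neighbours, and when it has three, solidity
   forces each of them to see three code vertices.  So 6 (2n - |C|) <= 6 |C|,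
   and the bottom row is a code of size n. *)

Section Discharging.
Variables (T : finType) (e : rel T) (C : {set T}).

Local Notation I := (Icode e C).

Definition coded_by (c : T) : {set T} := [set u in ~: C | c \in I u].

(* 6 / k for k = 1, 2, 3, kept at 2 beyond. *)
Definition charge (u : T) : nat :=
  if #|I u| <= 1 then 6 else if #|I u| == 2 then 3 else 2.

Lemma charge_le6 u : charge u <= 6.
Proof. by rewrite /charge; case: ifP => //; case: ifP. Qed.

Lemma charge_mul_ge u : 0 < #|I u| -> 6 <= #|I u| * charge u.
Proof. by rewrite /charge; case: #|I u| => [|[|[|k]]] //= _; lia. Qed.

Lemma charge_discharge :
    {in ~: C, forall u, I u != set0} ->
    {in C, forall c, \sum_(u in coded_by c) charge u <= 6} ->
  #|~: C| <= #|C|.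
Proof.
move=> dom share; rewrite -(leq_pmul2l (isT : 0 < 6)).
have exchange : \sum_(u in ~: C) \sum_(c in I u) charge u =
                \sum_(c in C) \sum_(u in coded_by c) charge u.
  rewrite (exchange_big_dep (mem C)) /=; last by move=> u c _ /setIP[].
  by apply: eq_bigr => c _; apply: eq_bigl => u; rewrite !inE.
apply: (@leq_trans (\sum_(u in ~: C) \sum_(c in I u) charge u)).
  rewrite mulnC -sum_nat_const; apply: leq_sum => u uC; rewrite sum_nat_const.
  by apply: charge_mul_ge; rewrite card_gt0; apply: dom.
by rewrite exchange mulnC -sum_nat_const; apply: leq_sum.
Qed.

Lemma Icode_notin u x : u \notin C -> (x \in I u) = (x \in C) && e u x.
Proof.
move=> uC; rewrite /Icode /cnbhd !inE andbC.
by case: (eqVneq x u) => [->|]; rewrite ?(negbTE uC).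
Qed.

Lemma Icode_card_gt2 u x y z : u \notin C ->
    [/\ x \in C, y \in C & z \in C] -> [/\ e u x, e u y & e u z] ->
    [/\ x != y, y != z & z != x] ->
  2 < #|I u|.
Proof.
move=> uC [xC yC zC] [ux uy uz] neq; apply/card_gt2P; exists x, y, z.
by rewrite !Icode_notin // xC yC zC ux uy uz.
Qed.

Hypothesis hC : is_DLD e C.

Lemma DLD_separates u v : u \notin C -> v \notin C -> u != v ->
  exists2 x, x \in I u & x \notin I v.
Proof.
move=> uC vC uv; case/and3P: hC => _ _ /forall_inP/(_ u).
rewrite inE uC => /(_ isT)/forall_inP/(_ v); rewrite inE vC => /(_ isT).
by rewrite uv => /subsetPn[x]; exists x.
Qed.

Lemma DLD_private u v : u \notin C -> v \notin C -> u != v ->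
  exists2 x, x \in C & e u x && ~~ e v x.
Proof.
move=> uC vC uv; have [x] := DLD_separates uC vC uv.
rewrite !Icode_notin // => /andP[xC ux]; rewrite xC => vx.
by exists x; rewrite ?ux.
Qed.

Lemma coded_by_solo c u : u \in coded_by c -> #|I u| <= 1 -> coded_by c = [set u].
Proof.
rewrite inE in_setC => /andP[uC cu] u1; apply/setP => v; rewrite inE.
apply/idP/eqP => [|->]; last by rewrite inE in_setC uC.
rewrite inE in_setC => /andP[vC cv]; case: (eqVneq u v) => // uv.
have [x xu] := DLD_separates uC vC uv.
by rewrite -(elimT card_le1_eqP u1 x c xu cu) cv.
Qed.

Lemma coded_by_charge_le6 c :
    #|coded_by c| <= 2 \/ {in coded_by c, forall u, 2 < #|I u|} /\ #|coded_by c| <= 3 ->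
  \sum_(u in coded_by c) charge u <= 6.
Proof.
have [/exists_inP[u uS u1] _|/exists_inPn heavy] := boolP [exists u in coded_by c, #|I u| <= 1].
  by rewrite (coded_by_solo uS u1) big_set1 charge_le6.
have charge_le3 u : u \in coded_by c -> charge u <= 3.
  by move=> uS; rewrite /charge (negbTE (heavy u uS)); case: eqP.
case=> [S2|[S_heavy S3]].
  apply: (@leq_trans (\sum_(u in coded_by c) 3)); first exact: leq_sum.
  by rewrite sum_nat_const; lia.
have charge2 u : u \in coded_by c -> charge u = 2.
  by move/S_heavy; rewrite /charge; case: #|I u| => [|[|[|]]].
by rewrite (eq_bigr _ charge2) sum_nat_const; lia.
Qed.

End Discharging.

Lemma card_cover3_meet (T : finType) (S A B D : {set T}) :
    S \subset A :|: B :|: D -> #|A| <= 1 -> #|B| <= 1 -> #|D| <= 1 -> 2 < #|S| ->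
  [/\ S :&: A != set0, S :&: B != set0 & S :&: D != set0].
Proof.
move=> sSABD A1 B1 D1; rewrite -{1}(setIidPl sSABD) !setIUr => S3.
have le1 (X : {set T}) : #|X| <= 1 -> #|S :&: X| <= 1.
  by apply: leq_trans; apply/subset_leq_card/subsetIr.
have := cardsUI (S :&: A :|: S :&: B) (S :&: D); have := cardsUI (S :&: A) (S :&: B).
move: (le1 _ A1) (le1 _ B1) (le1 _ D1).
by split; rewrite -card_gt0; lia.
Qed.

Section Ladder.
Variable n : nat.
Local Notation V := ('I_n * 'I_2)%type.
Local Notation ladder := (cart_rel (@path_rel n) (@path_rel 2)).

Definition col (x : V) : nat := x.1.
Definition row (x : V) : nat := x.2.

Lemma row_lt2 x : row x < 2. Proof. exact: ltn_ord. Qed.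

Lemma eq_ladderE x y : (x == y) = (col x == col y) && (row x == row y).
Proof. by case: x y => [x1 x2] [y1 y2]. Qed.

Lemma ladderE x y : ladder x y =
  (col x == col y) && (row x != row y) ||
  (((col x).+1 == col y) || ((col y).+1 == col x)) && (row x == row y).
Proof.
rewrite /cart_rel /path_rel; congr (_ && _ || _).
have neq2 a b : a < 2 -> b < 2 -> (a.+1 == b) || (b.+1 == a) = (a != b) by lia.
by rewrite neq2 ?ltn_ord.
Qed.

Definition mate (c : V) := [set y | (col y == col c) && (row y != row c)].
Definition left_of (c : V) := [set y | ((col y).+1 == col c) && (row y == row c)].
Definition right_of (c : V) := [set y | (col y == (col c).+1) && (row y == row c)].

Lemma card_le1_coords (A : {set V}) :
  {in A &, forall x y, col x = col y /\ row x = row y} -> #|A| <= 1.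
Proof.
move=> coords; apply/card_le1_eqP => x y xA yA.
by apply/esym/eqP; rewrite eq_ladderE; case: (coords x y xA yA) => -> ->; rewrite !eqxx.
Qed.

Lemma card_nbr_parts_le1 c :
  [/\ #|mate c| <= 1, #|left_of c| <= 1 & #|right_of c| <= 1].
Proof.
have := row_lt2 c.
by split; apply: card_le1_coords => x y; rewrite !inE;
  have := row_lt2 x; have := row_lt2 y; lia.
Qed.

Lemma coded_by_ladder_sub (C : {set V}) c : c \in C ->
  coded_by ladder C c \subset mate c :|: left_of c :|: right_of c.
Proof.
move=> cC; apply/subsetP => u; rewrite inE in_setC => /andP[uC].
rewrite Icode_notin // cC ladderE !inE.
by have := row_lt2 u; have := row_lt2 c; lia.
Qed.

Section LadderCode.
Variable C : {set V}.
Hypothesis hC : is_DLD ladder C.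
Local Notation I := (Icode ladder C).
Local Notation S := (coded_by ladder C).

Lemma ladder_heavy_nbrs c a l r : c \in C ->
    a \in S c -> a \in mate c -> l \in S c -> l \in left_of c ->
    r \in S c -> r \in right_of c ->
  [/\ 2 < #|I a|, 2 < #|I l| & 2 < #|I r|].
Proof.
move=> cC; rewrite !inE => /andP[aC _] aM /andP[lC _] lL /andP[rC _] rR.
have lt2 := row_lt2.
have [aCol aRow] : col a = col c /\ row a = 1 - row c.
  by move: aM (lt2 a) (lt2 c); clear; lia.
have [lCol lRow] : (col l).+1 = col c /\ row l = row c.
  by move: lL; clear; lia.
have [rCol rRow] : col r = (col c).+1 /\ row r = row c.
  by move: rR; clear; lia.
have [la ra] : l != a /\ r != a by rewrite !eq_ladderE; split; apply/nandP; left; apply/eqP; lia.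
have [al ar] : a != l /\ a != r by rewrite ![a == _]eq_sym.
(* Separating the senders pairwise pins down four code vertices around c. *)
have [x xC /andP[xa xl]] := DLD_private hC aC lC al.
have [xCol xRow] : col x = (col c).+1 /\ row x = 1 - row c.
  by move: xa xl (lt2 x) (lt2 c); rewrite !ladderE; clear -aCol aRow lCol lRow; lia.
have [y yC /andP[ya yr]] := DLD_private hC aC rC ar.
have [yCol yRow] : (col y).+1 = col c /\ row y = 1 - row c.
  by move: ya yr (lt2 y) (lt2 c); rewrite !ladderE; clear -aCol aRow rCol rRow; lia.
have [z zC /andP[zl za]] := DLD_private hC lC aC la.
have [zCol zRow] : (col z).+2 = col c /\ row z = row c.
  by move: zl za (lt2 z) (lt2 c); rewrite !ladderE; clear -aCol aRow lCol lRow; lia.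
have [w wC /andP[wr wa]] := DLD_private hC rC aC ra.
have [wCol wRow] : col w = (col c).+2 /\ row w = row c.
  by move: wr wa (lt2 w) (lt2 c); rewrite !ladderE; clear -aCol aRow rCol rRow; lia.
have ltc := lt2 c; split.
- apply: (Icode_card_gt2 aC (And3 cC xC yC)).
    by rewrite !ladderE; clear -aCol aRow xCol xRow yCol yRow ltc; split; lia.
  by rewrite !eq_ladderE; clear -aCol aRow xCol xRow yCol yRow ltc; split; lia.
- apply: (Icode_card_gt2 lC (And3 cC yC zC)).
    by rewrite !ladderE; clear -lCol lRow zCol zRow yCol yRow ltc; split; lia.
  by rewrite !eq_ladderE; clear -lCol lRow zCol zRow yCol yRow ltc; split; lia.
- apply: (Icode_card_gt2 rC (And3 cC xC wC)).
    by rewrite !ladderE; clear -rCol rRow xCol xRow wCol wRow ltc; split; lia.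
  by rewrite !eq_ladderE; clear -rCol rRow xCol xRow wCol wRow ltc; split; lia.
Qed.

Lemma ladder_charge_le6 c : c \in C -> \sum_(u in S c) charge ladder C u <= 6.
Proof.
move=> cC; apply: coded_by_charge_le6 => //.
have [mate1 left1 right1] := card_nbr_parts_le1 c.
have sub := coded_by_ladder_sub cC.
have [S2|S3] := leqP #|S c| 2; [by left | right].
have [] := card_cover3_meet sub mate1 left1 right1 S3.
move=> /set0Pn[a /setIP[aS aM]] /set0Pn[l /setIP[lS lL]] /set0Pn[r /setIP[rS rR]].
have [ha hl hr] := ladder_heavy_nbrs cC aS aM lS lL rS rR.
split=> [u /(subsetP sub)|].
  case/setUP => [/setUP[]|] uP.
  - by rewrite -(elimT card_le1_eqP mate1 u a uP aM).
  - by rewrite -(elimT card_le1_eqP left1 u l uP lL).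
  - by rewrite -(elimT card_le1_eqP right1 u r uP rR).
apply: leq_trans (subset_leq_card sub) _.
have := cardsUI (mate c :|: left_of c) (right_of c); have := cardsUI (mate c) (left_of c).
lia.
Qed.

Lemma ladder_DLD_card_ge : n <= #|C|.
Proof.
have dom : {in ~: C, forall u, I u != set0}.
  by case/and3P: hC => _ /forall_inP.
have := charge_discharge dom ladder_charge_le6.
have := cardsC C; rewrite card_prod !card_ord; lia.
Qed.

End LadderCode.

Definition bottom := [set x : V | row x == 0].

Lemma Icode_bottom u x : row u != 0 ->
  (x \in Icode ladder bottom u) = (row x == 0) && (col x == col u).
Proof.
move=> u1; rewrite Icode_notin ?inE // ladderE.
by have := row_lt2 u; have := row_lt2 x; lia.
Qed.

Lemma bottom_DLD : 0 < n -> is_DLD ladder bottom.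
Proof.
move=> n_gt0; apply/and3P; split.
- by apply/set0Pn; exists (Ordinal n_gt0, ord0); rewrite inE.
- apply/forall_inP => u; rewrite !inE => u1.
  by apply/set0Pn; exists (u.1, ord0); rewrite Icode_bottom // /row /col /= eqxx.
apply/forall_inP => u; rewrite !inE => u1; apply/forall_inP => v; rewrite !inE => v1.
apply/implyP => uv; apply/subsetPn; exists (u.1, ord0);
  rewrite !Icode_bottom // /row /col /= ?eqxx //=.
move: uv u1 v1 (row_lt2 u) (row_lt2 v); rewrite eq_ladderE /row /col; lia.
Qed.

Lemma card_bottom : #|bottom| = n.
Proof.
have -> : bottom = [set (i, ord0) | i : 'I_n].
  apply/setP => -[i j]; rewrite !inE /row /=; apply/idP/imsetP => [j0|[k _ [_ ->]] //].
  by exists i => //; congr pair; apply/val_inj/eqP.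
by rewrite card_imset ?card_ord // => i k [].
Qed.

End Ladder.

Theorem mainTheorem18 (n : nat) (hn : 1 <= n) :
  gammaDLD (cart_rel (@path_rel n) (@path_rel 2)) = n.
Proof.
apply/eqP; rewrite /gammaDLD eqn_leq; apply/andP; split.
  rewrite -[leqRHS](card_bottom n).
  exact: (bigmin_le_cond _ (fun C : {set _} => #|C|) (bottom_DLD hn)).
apply: (big_ind (leq n)) => [|x y nx ny|C]; last exact: ladder_DLD_card_ge.
- by rewrite card_prod !card_ord; lia.
- by rewrite leq_min nx ny.
Qed.
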